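(* Let $F$ be a distribution on the nonnegative integers $\mathbf Z^+$ with unbounded support. Then $F\in\mathcal S_{\text{lattice}}(\hat\gamma)$ if and only if: (i) $\liminf_{x\to\infty}F\{x-1\}/F\{x\}\ge e^{\hat\gamma}$ (over integers $x$); and (ii) $F*F\{n\}\sim c\,F\{n\}$ as $n\to\infty$ for some $c\in(0,\infty)$.
   Context: $F\{n\}$ denotes the mass of $F$ at the point $n$. $\varphi(\gamma)=\sum_{n\ge0}e^{\gamma n}F\{n\}\in(0,\infty]$ and $\hat\gamma=\sup\{\gamma:\varphi(\gamma)<\infty\}$. For $\gamma\ge0$, a distribution $F$ on $\mathbf Z^+$ with unbounded support belongs to $\mathcal S_{\text{lattice}}(\gamma)$ if (i) $\varphi(\gamma)<\infty$; (ii) $F\{n+1\}/F\{n\}\to e^{-\gamma}$ as $n\to\infty$; (iii) $F*F\{n\}\sim 2\varphi(\gamma)F\{n\}$ as $n\to\infty$. *)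

From mathcomp Require Import all_boot all_order all_algebra.
From mathcomp Require Import all_classical all_reals all_analysis.
Set Implicit Arguments. Unset Strict Implicit. Unset Printing Implicit Defensive.
Import Order.TTheory GRing.Theory Num.Theory.
Import numFieldNormedType.Exports.
Local Open Scope classical_set_scope.
Local Open Scope ring_scope.

Section Defs.
Variable R : realType.

Definition is_distrib (F : nat -> R) : Prop :=
  (forall n, 0 <= F n) /\ ((fun N => \sum_(0 <= k < N) F k) @ \oo --> (1 : R)).

Definition unbounded_support (F : nat -> R) : Prop :=
  forall N, exists n, (N <= n)%N /\ 0 < F n.

Definition lconv (F G : nat -> R) (n : nat) : R :=
  \sum_(i < n.+1) F i * G (n - i)%N.

Definition phi (F : nat -> R) (g : R) : \bar R :=
  (\sum_(0 <= n <oo) (expR (g * n%:R) * F n)%:E)%E.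

Definition gamma_hat (F : nat -> R) : \bar R :=
  ereal_sup [set (g%:E)%E | g in [set g : R | (phi F g < +oo)%E]].

Definition asym_equiv (a b : nat -> R) : Prop :=
  (\forall n \near \oo, b n != 0) /\ ((fun n => a n / b n) @ \oo --> (1 : R)).

Definition S_lattice (g : R) (F : nat -> R) : Prop :=
  [/\ 0 <= g, unbounded_support F,
      (phi F g < +oo)%E,
      (fun n => F n.+1 / F n) @ \oo --> expR (- g)
    & asym_equiv (lconv F F) (fun n => 2 * fine (phi F g) * F n)].

End Defs.

From mathcomp Require Import all_boot all_order all_algebra.
From mathcomp Require Import all_classical all_reals all_analysis.
From mathcomp Require Import lra zify ring.
Set Implicit Arguments.
Unset Strict Implicit.
Unset Printing Implicit Defensive.
Import Order.TTheory GRing.Theory Num.Theory.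
Import numFieldNormedType.Exports.
Local Open Scope classical_set_scope.
Local Open Scope ring_scope.

(* Forward direction: F{n+1}/F{n} -> e^-g gives the liminf, and the
   constant in F*F ~ c F is c = 2 phi(g).

   Backward direction: g := hat gamma is finite, since a ratio F{n}/F{n+1}
   tending to infinity would give F*F{n+K} >= F{K} F{n} >> c F{n+K}.  The
   tilted masses a_n := e^{g n} F{n} satisfy a*a ~ c a and
   liminf a_n/a_{n+1} >= 1, so a_{n-i} >= (1 - o(1)) a_n for each fixed i.
   Keeping the first and last K terms of a*a(n) gives
   2 (a_0 + ... + a_{K-1}) <= c, hence phi(g) <= c/2.  Conversely
   sum_n a_n e^{s n} diverges for every s > 0 (definition of hat gamma).
   Weighting by the truncated exponentials w_M(n) = e^{s min(n, M)}, the mass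
   U_M = sum_n a_n w_M(n) grows from about phi(g) to infinity in steps of
   ratio e^s, so it visits a window just above phi(g); there the bound
   U_M^2 >= sum_n (a*a)(n) w_M(n), valid as w_M is submultiplicative, is
   incompatible with c > 2 phi(g).  So c = 2 phi(g).  Finally the terms
   a_0 a_{n+1} and a_i a_{n+1-i}, i >= 1, of a*a(n+1) add up to about
   2 a_0 a_{n+1} + 2 (phi(g) - a_0) a_n, which the bound
   (2 phi(g) + o(1)) a_{n+1} only allows if a_{n+1} >= (1 - o(1)) a_n;
   hence a_{n+1}/a_n -> 1. *)

(** * Convolution and partial sums *)

Lemma sum_antidiag_nat (V : nmodType) (G : nat -> nat -> V) N :
  \sum_(0 <= n < N) \sum_(0 <= i < n.+1) G i (n - i)%N =
  \sum_(0 <= i < N) \sum_(0 <= j < N - i) G i j.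
Proof.
elim: N => [|N IH]; first by rewrite !big_geq.
rewrite big_nat_recr //= IH [RHS]big_nat_recr //= subSn // subnn big_nat1.
rewrite [X in _ = X + _](_ : _ =
  \sum_(0 <= i < N) (\sum_(0 <= j < N - i) G i j + G i (N - i)%N)); last first.
  by apply: eq_big_nat => i /andP[_ iN]; rewrite subSn ?big_nat_recr //= ltnW.
by rewrite big_split /= -addrA [X in _ + X = _]big_nat_recr //= subnn.
Qed.

Section Convolution.
Variable R : realType.
Implicit Types (a b w : nat -> R).

Lemma lconvE a b n : lconv a b n = \sum_(0 <= i < n.+1) a i * b (n - i)%N.
Proof. by rewrite /lconv big_mkord. Qed.

Lemma ler_sum_widen a m n : (forall k, 0 <= a k) -> (m <= n)%N ->
  \sum_(0 <= k < m) a k <= \sum_(0 <= k < n) a k.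
Proof. by move=> a0; apply: nondecreasing_series. Qed.

Lemma lconv_ge0 a n : (forall k, 0 <= a k) -> 0 <= lconv a a n.
Proof. by move=> a0; apply: sumr_ge0 => i _; apply: mulr_ge0. Qed.

Lemma lconv_ge_term a n i : (forall k, 0 <= a k) -> (i <= n)%N ->
  a i * a (n - i)%N <= lconv a a n.
Proof.
move=> a0 le_in; rewrite lconvE (big_cat_nat (leq0n i)) //=; last by lia.
rewrite [X in _ <= _ + X]big_ltn // addrCA lerDl.
by apply: addr_ge0; apply: sumr_ge0 => j _; apply: mulr_ge0.
Qed.

Lemma lconv_ge_ends a K n : (forall k, 0 <= a k) -> (K + K <= n.+1)%N ->
  2 * \sum_(0 <= i < K) a i * a (n - i)%N <= lconv a a n.
Proof.
move=> a0 le_Kn; have aa0 i : 0 <= a i * a (n - i)%N by apply: mulr_ge0.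
rewrite lconvE [leRHS](big_cat_nat (leq0n K)) /=; last by lia.
rewrite mulr2n mulrDl mul1r lerD2l.
rewrite [leRHS](big_cat_nat (n := n.+1 - K)) /=; [|lia|lia].
rewrite -[leLHS]add0r lerD ?sumr_ge0 //.
rewrite -{1}[(n.+1 - K)%N]add0n big_addn subKn; last by lia.
rewrite big_nat_rev /= add0n; apply: ler_sum_nat => i /andP[_ iK].
have -> : (i + (n.+1 - K) = n - (K - i.+1))%N by lia.
by rewrite subKn 1?mulrC //; lia.
Qed.

Lemma sqr_sum_le_sum_lconv a M : (forall k, 0 <= a k) ->
  (\sum_(0 <= i < M) a i) ^+ 2 <= \sum_(0 <= n < M + M) lconv a a n.
Proof.
move=> a0; under [in leRHS]eq_bigr do rewrite lconvE.
rewrite (sum_antidiag_nat (fun i j => a i * a j)) expr2 mulr_suml.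
apply: (@le_trans _ _ (\sum_(0 <= i < M) \sum_(0 <= j < M + M - i) a i * a j)).
  apply: ler_sum_nat => i /andP[_ iM]; rewrite mulr_sumr.
  by apply: ler_sum_widen => [j|]; [apply: mulr_ge0 | lia].
apply: ler_sum_widen (leq_addr M M) => i.
by apply: sumr_ge0 => j _; apply: mulr_ge0.
Qed.

Lemma sum_lconv_weighted_le_sqr a w N :
  (forall k, 0 <= a k) -> (forall k, 0 <= w k) ->
  (forall n i, (i <= n)%N -> w n <= w i * w (n - i)%N) ->
  \sum_(0 <= n < N) lconv a a n * w n <= (\sum_(0 <= n < N) a n * w n) ^+ 2.
Proof.
move=> a0 w0 w_submul; set b := fun n => a n * w n.
have b0 k : 0 <= b k by apply: mulr_ge0.
apply: (@le_trans _ _ (\sum_(0 <= n < N) lconv b b n)).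
  apply: ler_sum_nat => n _; rewrite !lconvE mulr_suml.
  apply: ler_sum_nat => i /andP[_ le_in]; rewrite /b mulrACA.
  by apply: ler_wpM2l; [apply: mulr_ge0 | apply: w_submul].
under eq_bigr do rewrite lconvE.
rewrite (sum_antidiag_nat (fun i j => b i * b j)) expr2 mulr_suml.
apply: ler_sum_nat => i _; rewrite mulr_sumr.
apply: (ler_sum_widen (a := fun j => b i * b j)) => [j|]; last by lia.
exact: mulr_ge0.
Qed.

Lemma sum_lconv_weighted_ge a w (k : R) N0 N :
  (forall n, 0 <= a n) -> (forall n, 1 <= w n) -> 0 <= k -> (N0 <= N)%N ->
  (forall n, (N0 <= n)%N -> k * a n <= lconv a a n) ->
  \sum_(0 <= n < N0) lconv a a n +
    k * (\sum_(0 <= n < N) a n * w n - \sum_(0 <= n < N0) a n * w n)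
  <= \sum_(0 <= n < N) lconv a a n * w n.
Proof.
move=> a_ge0 w_ge1 k_ge0 N0N conv_ge.
rewrite (big_cat_nat (leq0n N0) N0N) /= addrAC subrr add0r.
rewrite [leRHS](big_cat_nat (leq0n N0) N0N) /=; apply: lerD.
  by apply: ler_sum_nat => n _; rewrite ler_peMr // lconv_ge0.
rewrite mulr_sumr; apply: ler_sum_nat => n /andP[N0n _].
by rewrite mulrA ler_wpM2r ?conv_ge // (le_trans ler01).
Qed.

End Convolution.

Section NonnegSeries.
Variables (R : realType) (a : nat -> R) (l : R).
Hypotheses (a_ge0 : forall n, 0 <= a n) (a_cvg : series a @ \oo --> l).

Lemma series_le_lim n : series a n <= l.
Proof.
have nd : nondecreasing_seq (series a) by apply: nondecreasing_series.
rewrite -(cvg_lim _ a_cvg) //; apply: nondecreasing_cvgn_le => //.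
exact: cvgP a_cvg.
Qed.

Lemma near_series_ge r : r < l -> \forall n \near \oo, r <= series a n.
Proof.
move=> rl; apply: lt_lim; first exact: nondecreasing_series.
  exact: cvgP a_cvg.
by rewrite (cvg_lim _ a_cvg).
Qed.

End NonnegSeries.

(** * Sequences with liminf a_n / a_(n+1) >= 1 *)

Lemma near_succ (P : nat -> Prop) :
  (\forall n \near \oo, P n) -> \forall n \near \oo, P n.+1.
Proof. by case=> N _ PN; exists N => // n /leqW /PN. Qed.

Lemma bernoulli_inequality (R : realDomainType) (x : R) n :
  x <= 1 -> 1 - n%:R * x <= (1 - x) ^+ n.
Proof.
move=> x1; elim: n => [|n IH]; first by rewrite mul0r subr0 expr0.
have := ler_wpM2l (_ : 0 <= 1 - x) IH; rewrite ?subr_ge0 // => h.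
have n0 : 0 <= n%:R :> R by []; rewrite exprS -natr1 mulrDl mul1r; nra.
Qed.

(* r = (3 + t) / 4 satisfies 2 r^2 >= 1 + t and t (3 - t) <= 1 + t. *)
Lemma ratio_step_arith (R : realFieldType) (t D T a0 x y L : R) :
  0 < t -> t < 1 -> 0 < D -> 0 <= x -> (3 + t) / 4 * D <= T ->
  2 * (a0 * y + (3 + t) / 4 * T * x) <= L ->
  L <= (2 * (a0 + D) + (1 - t) * D) * y -> t * x <= y.
Proof.
set r := (3 + t) / 4 => t_gt0 t_lt1 D_gt0 x_ge0 rD_le lower upper.
have rT : (1 + t) * D <= 2 * (r * T).
  have rr : 1 + t <= 2 * r ^+ 2.
    rewrite -subr_ge0 (_ : _ - _ = (1 - t) ^+ 2 / 8); last by rewrite /r; field.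
    by rewrite divr_ge0 ?sqr_ge0.
  have : 0 < r by rewrite /r; lra.
  nra.
have key : (1 + t) * D * x <= (3 - t) * D * y.
  apply: le_trans (ler_wpM2r x_ge0 rT) _.
  have -> : (3 - t) * D * y =
    (2 * (a0 + D) + (1 - t) * D) * y - 2 * (a0 * y) by ring.
  have -> : 2 * (r * T) * x = 2 * (a0 * y + r * T * x) - 2 * (a0 * y) by ring.
  by rewrite lerD2r (le_trans lower upper).
have pos : 0 < (3 - t) * D by rewrite mulr_gt0 //; lra.
rewrite -(ler_pM2l pos); apply: le_trans key.
rewrite mulrA ler_wpM2r // -subr_ge0.
have -> : (1 + t) * D - (3 - t) * D * t = D * (1 - t) ^+ 2 by ring.
by rewrite mulr_ge0 ?sqr_ge0 ?ltW.
Qed.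

Section RatioBounds.
Variables (R : realType) (a : nat -> R).
Hypothesis a_ge0 : forall n, 0 <= a n.

Lemma ratio_iter_le (t : R) n0 : 0 <= t ->
  (forall m, (n0 <= m)%N -> t * a m.+1 <= a m) ->
  forall i n, (n0 + i <= n)%N -> t ^+ i * a n <= a (n - i)%N.
Proof.
move=> t0 ratio; elim=> [|i IH] n le_n; first by rewrite expr0 mul1r subn0.
rewrite exprS -mulrA; apply: le_trans (ratio (n - i.+1)%N _); last by lia.
have -> : ((n - i.+1).+1 = n - i)%N by lia.
by apply: ler_wpM2l => //; apply: IH; lia.
Qed.

Hypothesis a_ratio : forall t, t < 1 -> \forall n \near \oo, t * a n.+1 <= a n.

Lemma near_shift_ge K t : t < 1 ->
  \forall n \near \oo, forall i, (i <= K)%N -> t * a n <= a (n - i)%N.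
Proof.
move=> t1; have [t_le0|t_gt0] := lerP t 0.
  by near=> n => i _; apply: le_trans (a_ge0 _); apply: mulr_le0_ge0.
set x := (1 - t) / K.+1%:R.
have x_gt0 : 0 < x by rewrite divr_gt0 ?ltr0n // subr_gt0.
have Kx : K%:R * x <= 1 - t.
  rewrite mulrA ler_pdivrMr ?ltr0n // -natr1.
  have : 0 <= K%:R :> R by []; nra.
have x_lt1 : x < 1.
  rewrite ltr_pdivrMr ?ltr0n // mul1r.
  have : 1 <= K.+1%:R :> R by rewrite ler1n.
  lra.
have t_le n : (n <= K)%N -> t <= (1 - x) ^+ n.
  move=> nK; apply: le_trans (_ : (1 - x) ^+ K <= _); last first.
    by apply: ler_wiXn2l => //; lra.
  by apply: (le_trans _ (bernoulli_inequality K (ltW x_lt1))); lra.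
have [n0 _ ratio] : \forall n \near \oo, (1 - x) * a n.+1 <= a n.
  by apply: a_ratio; lra.
have s_ge0 : 0 <= 1 - x by lra.
have iter := ratio_iter_le s_ge0 (fun m m_ge => ratio m m_ge).
near=> n => i iK.
apply: le_trans (iter _ _ _); first by rewrite ler_wpM2r ?t_le.
rewrite (leq_trans _ (_ : n0 + K <= n)%N) ?leq_add2l //.
by near: n; apply: nbhs_infty_ge.
Unshelve. all: by end_near.
Qed.

Lemma twice_partial_sum_le c :
  (\forall n \near \oo, 0 < a n) ->
  (forall e, 0 < e -> \forall n \near \oo, lconv a a n <= (c + e) * a n) ->
  forall K, 2 * \sum_(0 <= i < K) a i <= c.
Proof.
move=> a_pos conv_le K; set A := \sum_(0 <= i < K) a i.
have A_ge0 : 0 <= 2 * A by rewrite mulr_ge0 // sumr_ge0.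
rewrite -lee_fin; apply/lee_mul01Pr; rewrite ?lee_fin // => t /andP[_ t1].
rewrite lee_fin; apply/ler_addgt0Pr => e e0.
have /filter_ex[n [an conv shift nK]] : \forall n \near \oo,
    [/\ 0 < a n, lconv a a n <= (c + e) * a n,
        forall i, (i <= K)%N -> t * a n <= a (n - i)%N & (K + K <= n)%N].
  near=> n; split; near: n; [exact: a_pos|exact: conv_le|exact: near_shift_ge|].
  exact: nbhs_infty_ge.
rewrite -(ler_pM2r an); apply: le_trans conv.
apply: le_trans (lconv_ge_ends a_ge0 (leqW nK)).
rewrite mulrCA -mulrA ler_pM2l // /A mulr_sumr mulr_suml.
apply: ler_sum_nat => i /andP[_ iK].
by rewrite mulrAC mulrC ler_wpM2l // shift // ltnW.
Unshelve. all: by end_near.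
Qed.

Lemma near_succ_ge_of_lconv (l : R) :
  series a @ \oo --> l ->
  (\forall n \near \oo, 0 < a n) ->
  (forall e, 0 < e -> \forall n \near \oo, lconv a a n <= (2 * l + e) * a n) ->
  (exists2 K, (0 < K)%N & 0 < a K) ->
  forall t, t < 1 -> \forall n \near \oo, t * a n <= a n.+1.
Proof.
move=> a_cvg a_pos conv_le [[//|K] _ aK] t t1.
have [t_le0|t_gt0] := lerP t 0.
  by near=> n; apply: le_trans (a_ge0 _); apply: mulr_le0_ge0.
set D := l - a 0%N.
have D_gt0 : 0 < D.
  have := series_le_lim a_ge0 a_cvg K.+2; rewrite /series /= /D.
  rewrite big_nat_recl // big_nat_recr //= addrA => le_l.
  suff : 0 <= \sum_(0 <= i < K) a i.+1 by lra.
  by apply: sumr_ge0.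
set r := (3 + t) / 4.
have /filter_ex[K1 hK1] : \forall n \near \oo, l - (1 - r) * D <= series a n.
  apply: (near_series_ge a_ge0 a_cvg); suff : 0 < (1 - r) * D by lra.
  by rewrite mulr_gt0 // /r; lra.
set T := \sum_(0 <= i < K1) a i.+1.
have rD_le_T : r * D <= T.
  have := ler_sum_widen a_ge0 (leqnSn K1).
  rewrite big_nat_recl // -/T; move: hK1.
  by rewrite /series /= /D mulrBl mul1r; lra.
have e_gt0 : 0 < (1 - t) * D by rewrite mulr_gt0 // subr_gt0.
near=> n.
have [an conv shift nK] : [/\ 0 < a n,
    lconv a a n.+1 <= (2 * l + (1 - t) * D) * a n.+1,
    forall i, (i <= K1)%N -> r * a n <= a (n - i)%N &
    (K1.+1 + K1.+1 <= n.+2)%N].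
  split; near: n; [exact: a_pos | exact: near_succ (conv_le _ e_gt0) |
                   by apply: near_shift_ge; rewrite /r; lra |].
  by apply: filterS (nbhs_infty_ge (K1 + K1)) => m /=; lia.
have lower : 2 * (a 0%N * a n.+1 + r * T * a n) <= lconv a a n.+1.
  apply: le_trans (lconv_ge_ends a_ge0 nK); rewrite ler_pM2l // big_nat_recl //.
  rewrite subn0 lerD2l /T mulr_sumr mulr_suml.
  apply: ler_sum_nat => i /andP[_ iK1].
  by rewrite subSS mulrAC mulrC ler_wpM2l // shift // ltnW.
have lE : l = a 0%N + D by rewrite /D addrC subrK.
rewrite lE in conv.
exact: ratio_step_arith t_gt0 t1 D_gt0 (ltW an) rD_le_T lower conv.
Unshelve. all: by end_near.
Qed.

End RatioBounds.

(** * Truncated exponential weights *)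

Lemma exists_expR_le (R : realType) (m : nat) (e : R) : 0 < e ->
  exists2 s : R, 0 < s & forall k, (k <= m)%N -> expR (s * k%:R) <= 1 + e.
Proof.
move=> e_gt0; have ln_gt0 : 0 < ln (1 + e) by rewrite ln_gt0 // ltrDl.
exists (ln (1 + e) / m.+1%:R); first by rewrite divr_gt0 ?ltr0n.
move=> k km; rewrite -[leRHS]lnK ?posrE ?ler_expR; last lra.
rewrite mulrAC ler_pdivrMr ?ltr0n //.
by apply: ler_wpM2l; [exact: ltW | rewrite ler_nat; exact: leqW].
Qed.

Lemma discrete_ivt (R : realDomainType) (W : nat -> R) (q L : R) N : 0 <= q ->
  W 0%N < L -> L < W N -> (forall M, W M.+1 <= q * W M) ->
  exists M, L <= W M <= q * L.
Proof.
move=> q_ge0 W0 WN step.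
suff : forall M, W M < L \/ exists M, L <= W M <= q * L.
  by case/(_ N) => // ?; lra.
elim=> [|M [IH|]]; [by left| |by right].
have [LW|] := lerP L (W M.+1); last by left.
right; exists M.+1; rewrite LW /=.
by apply: le_trans (step M) _; rewrite ler_wpM2l // ltW.
Qed.

Section TruncatedTilt.
Variables (R : realType) (a : nat -> R) (s : R).
Hypotheses (a_ge0 : forall n, 0 <= a n) (s_gt0 : 0 < s).

Definition trunc_exp (M n : nat) := expR (s * (minn n M)%:R).

Lemma trunc_exp_ge1 M n : 1 <= trunc_exp M n.
Proof.
by apply: (le_trans _ (expR_ge1Dx _)); rewrite lerDl mulr_ge0 // ltW.
Qed.

Lemma trunc_exp_submul M n i : (i <= n)%N ->
  trunc_exp M n <= trunc_exp M i * trunc_exp M (n - i).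
Proof.
move=> le_in; rewrite -expRD -mulrDr ler_expR.
by apply: ler_wpM2l; [exact: ltW | rewrite -natrD ler_nat; lia].
Qed.

Lemma exists_trunc_exp_between L N :
  \sum_(0 <= n < N) a n < L -> L < \sum_(0 <= n < N) a n * expR (s * n%:R) ->
  exists M, L <= \sum_(0 <= n < N) a n * trunc_exp M n <= expR s * L.
Proof.
move=> lt_L L_lt; apply: (discrete_ivt (N := N)) => [|||M].
- exact: expR_ge0.
- by under eq_bigr do rewrite /trunc_exp minn0 mulr0 expR0 mulr1.
- rewrite (eq_big_nat _ _ (F2 := fun n => a n * expR (s * n%:R))) //.
  move=> n /andP[_ nN].
  by rewrite /trunc_exp (minn_idPl (ltnW nN)).
rewrite mulr_sumr; apply: ler_sum_nat => n _; rewrite mulrCA ler_wpM2l //.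
rewrite -expRD ler_expR -[X in _ <= X + _]mulr1 -mulrDr.
apply: ler_wpM2l; [exact: ltW | rewrite addrC natr1 ler_nat -minnSS leq_min].
by rewrite geq_minr andbT (leq_trans (geq_minl _ _)).
Qed.

Lemma trunc_exp_sqr_ge k N0 N M : 0 <= k -> (N0 <= N)%N ->
  (forall n, (N0 <= n)%N -> k * a n <= lconv a a n) ->
  \sum_(0 <= n < N0) lconv a a n + k * (\sum_(0 <= n < N) a n * trunc_exp M n
    - \sum_(0 <= n < N0) a n * trunc_exp M n)
  <= (\sum_(0 <= n < N) a n * trunc_exp M n) ^+ 2.
Proof.
move=> k_ge0 N0N conv_ge.
apply: le_trans (sum_lconv_weighted_ge _ _ k_ge0 N0N conv_ge) _ => //.
  exact: trunc_exp_ge1.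
apply: sum_lconv_weighted_le_sqr => // [n|n i]; last exact: trunc_exp_submul.
exact: le_trans ler01 (trunc_exp_ge1 M n).
Qed.

End TruncatedTilt.

(* For u := U - l in [d/2, 3d/4], the right-hand side minus U^2 is at least
   u (d - u) - d^2/16 > 0. *)
Lemma exists_tolerance_sqr_lt (R : realFieldType) (l d : R) :
  0 <= l -> 0 < d -> exists2 e, 0 < e & forall U X C,
    l + d / 2 <= U <= (1 + e) * (l + d / 2) -> X <= (1 + e) * l ->
    l ^+ 2 - d ^+ 2 / 32 <= C -> U ^+ 2 < C + (2 * l + d) * (U - X).
Proof.
move=> l_ge0 d_gt0; set e := d ^+ 2 / (32 * ((2 * l + d) * (l + d + 1))).
have e_eq : e * (32 * ((2 * l + d) * (l + d + 1))) = d ^+ 2.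
  by rewrite /e divfK // !mulf_neq0 //; lra.
exists e => [|U X C /andP[U_lo U_hi] X_le C_ge].
  by rewrite divr_gt0 ?exprn_gt0 // !mulr_gt0 //; lra.
have small : (2 * l + d) * l * e <= d ^+ 2 / 32 by nra.
have {}U_hi : U <= l + 3 * d / 4 by nra.
have : (2 * l + d) * (U - (1 + e) * l) <= (2 * l + d) * (U - X).
  by rewrite ler_wpM2l ?lerB //; lra.
have : 0 <= (U - l - d / 2) * (l + 3 * d / 4 - U) by apply: mulr_ge0; lra.
nra.
Qed.

Lemma exists_sum_lconv_ge (R : realType) (a : nat -> R) (l eps : R) N1 :
  (forall n, 0 <= a n) -> series a @ \oo --> l -> 0 < eps ->
  exists2 N0, (N1 <= N0)%N & l ^+ 2 - eps <= \sum_(0 <= n < N0) lconv a a n.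
Proof.
move=> a_ge0 a_cvg eps_gt0.
have /cvgrPdist_le/(_ eps eps_gt0) : (series a \* series a) @ \oo --> l * l.
  by apply: cvgM.
move=> /filter_ex[M]; rewrite /= ler_distlC => /andP[sq_M _].
exists (N1 + (M + M))%N; first exact: leq_addr.
rewrite expr2; apply: le_trans sq_M _; rewrite /= -expr2.
apply: le_trans (sqr_sum_le_sum_lconv _ a_ge0) (ler_sum_widen _ (leq_addl _ _)).
by move=> n; apply: lconv_ge0.
Qed.

Lemma lconv_const_le_twice_sum (R : realType) (a : nat -> R) (c l : R) :
  (forall n, 0 <= a n) -> series a @ \oo --> l ->
  (forall e, 0 < e -> \forall n \near \oo, (c - e) * a n <= lconv a a n) ->
  (forall s, 0 < s -> ~ cvgn (series (fun n => a n * expR (s * n%:R)))) ->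
  c <= 2 * l.
Proof.
move=> a_ge0 a_cvg conv_ge heavy; rewrite leNgt; apply/negP => l_lt.
have l_ge0 : 0 <= l.
  by have := series_le_lim a_ge0 a_cvg 0; rewrite /series /= big_geq.
set d := (c - 2 * l) / 2; have d_gt0 : 0 < d by rewrite /d; lra.
have [N1 _ conv_N1] : \forall n \near \oo, (2 * l + d) * a n <= lconv a a n.
  by have := conv_ge d d_gt0; rewrite (_ : c - d = 2 * l + d) // /d; lra.
have d2_gt0 : 0 < d ^+ 2 / 32 by rewrite divr_gt0 ?exprn_gt0.
have [N0 N1N0 C0_ge] := exists_sum_lconv_ge N1 a_ge0 a_cvg d2_gt0.
have conv_N0 n : (N0 <= n)%N -> (2 * l + d) * a n <= lconv a a n.
  by move=> N0n; apply: conv_N1; rewrite /= (leq_trans N1N0).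
have [e e_gt0 window] := exists_tolerance_sqr_lt l_ge0 d_gt0.
have [s s_gt0 s_small] := exists_expR_le N0.+1 e_gt0.
have [N [N0N tail]] : exists N,
    (N0 <= N)%N /\ l + d / 2 < \sum_(0 <= n < N) a n * expR (s * n%:R).
  have /cvgryPgtr/(_ (l + d / 2) (num_real _)) := nondecreasing_dvgn_lt
    (nondecreasing_series (fun n _ _ => mulr_ge0 (a_ge0 n) (expR_ge0 _)))
    (heavy s s_gt0).
  by move=> /(filterI (nbhs_infty_ge N0))/filter_ex.
have head_lt : \sum_(0 <= n < N) a n < l + d / 2.
  by apply: le_lt_trans (series_le_lim a_ge0 a_cvg N) _; lra.
have [M /andP[U_lo U_hi]] := exists_trunc_exp_between a_ge0 s_gt0 head_lt tail.
have head : \sum_(0 <= n < N0) a n * trunc_exp s M n <= (1 + e) * l.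
  apply: le_trans (_ : \sum_(0 <= n < N0) a n * (1 + e) <= _).
    apply: ler_sum_nat => n /andP[_ nN0]; rewrite ler_wpM2l // s_small //.
    exact: leq_trans (geq_minl _ _) (leqW (ltnW nN0)).
  by rewrite -mulr_suml mulrC ler_wpM2l ?series_le_lim //; lra.
have U_in : l + d / 2 <= \sum_(0 <= n < N) a n * trunc_exp s M n
    <= (1 + e) * (l + d / 2).
  rewrite U_lo; apply: le_trans U_hi _; rewrite ler_wpM2r //; first lra.
  by have := s_small 1%N isT; rewrite mulr1.
have k_ge0 : 0 <= 2 * l + d by lra.
have := trunc_exp_sqr_ge a_ge0 s_gt0 M k_ge0 N0N conv_N0.
by move=> /le_lt_trans/(_ (window _ _ _ U_in head C0_ge)); rewrite ltxx.
Qed.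

(** * Exponential tilting of a distribution *)

Lemma nneseries_EFin_lim (R : realType) (f : nat -> R) : cvgn (series f) ->
  (\sum_(0 <= n <oo) (f n)%:E)%E = (limn (series f))%:E.
Proof.
move=> f_cvg; rewrite -EFin_lim //; congr (limn _); apply/funext => n.
by rewrite /series /= sumEFin.
Qed.

Lemma near_lt_limn_einf (R : realType) (u : (\bar R)^nat) r :
  (r%:E < limn_einf u)%E -> \forall n \near \oo, (r%:E < u n)%E.
Proof.
rewrite limn_einf_lim (cvg_lim _ (@cvg_einfs_sup _ u)) //.
case/ereal_sup_gt => _ [N _ <-] r_lt; exists N => // n /= Nn.
by apply: lt_le_trans r_lt _; apply: ereal_inf_lbound; exists n.
Qed.

Section Distribution.
Variables (R : realType) (F : nat -> R).
Hypothesis F_ge0 : forall n, 0 <= F n.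

Lemma near_succ_le_of_liminf x : (\forall n \near \oo, 0 < F n) ->
  (x%:E < limn_einf (fun n => (F n / F n.+1)%:E))%E ->
  \forall n \near \oo, x * F n.+1 <= F n.
Proof.
move=> F_pos /near_lt_limn_einf x_lt; near=> n.
have Fn1 : 0 < F n.+1 by near: n; exact: near_succ F_pos.
have : (x%:E < (F n / F n.+1)%:E)%E by near: n; exact: x_lt.
by rewrite lte_fin ltr_pdivlMr // => /ltW.
Unshelve. all: by end_near.
Qed.

Lemma asym_equiv_near_gt0 c : asym_equiv (lconv F F) (fun n => c * F n) ->
  \forall n \near \oo, 0 < F n.
Proof.
case=> nz _; apply: filterS nz => n; rewrite mulf_eq0 negb_or => /andP[_ Fn].
by rewrite lt_neqAle eq_sym Fn F_ge0.
Qed.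

Lemma asym_equiv_lconv_bounds c : 0 < c ->
  asym_equiv (lconv F F) (fun n => c * F n) ->
  forall e, 0 < e -> \forall n \near \oo,
    (c - e) * F n <= lconv F F n /\ lconv F F n <= (c + e) * F n.
Proof.
move=> c_gt0 F_conv e e_gt0; have F_pos := asym_equiv_near_gt0 F_conv.
case: F_conv => _ /cvgrPdist_lt /(_ (e / c) (divr_gt0 e_gt0 c_gt0)).
apply: filterS2 F_pos => n Fn; rewrite ltr_distlC => /andP[lo hi].
have cF : 0 < c * F n by rewrite mulr_gt0.
rewrite ltr_pdivlMr // in lo; rewrite ltr_pdivrMr // in hi.
have -> : (c - e) * F n = (1 - e / c) * (c * F n) by field; rewrite lt0r_neq0.
have -> : (c + e) * F n = (1 + e / c) * (c * F n) by field; rewrite lt0r_neq0.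
by split; apply: ltW.
Qed.

End Distribution.

(* With M := C / a K + 1, a K * M = C + a K although eventually
   a K * M * a (n + K) <= a K * a n <= lconv a a (n + K) <= C * a (n + K). *)
Lemma lconv_ratio_bounded (R : realType) (a : nat -> R) (C : R) K :
  (forall n, 0 <= a n) -> (0 < K)%N -> 0 < a K ->
  (\forall n \near \oo, 0 < a n) ->
  (\forall n \near \oo, lconv a a n <= C * a n) ->
  ~ (\forall n \near \oo, (C / a K + 1) * a n.+1 <= a n).
Proof.
move=> a_ge0 K_gt0 aK a_pos conv_le ratio.
have [N _ hN] := filterI (filterI a_pos conv_le) ratio.
have [[aNK convNK] _] := hN (N + K)%N (leq_addr _ _).
have C_ge0 : 0 <= C.
  by rewrite -(pmulr_lge0 _ aNK); apply: le_trans convNK; apply: lconv_ge0.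
set M := C / a K + 1.
have M_ge1 : 1 <= M by rewrite lerDr divr_ge0 // ltW.
have iter := ratio_iter_le (le_trans ler01 M_ge1) (fun m Nm => (hN m Nm).2)
  (leqnn (N + K)).
rewrite addnK in iter.
have := lconv_ge_term a_ge0 (leq_addl N K); rewrite addnK => term.
have : a K * (M * a (N + K)%N) <= C * a (N + K)%N.
  apply: le_trans convNK; apply: le_trans term; rewrite ler_wpM2l ?(ltW aK) //.
  by apply: le_trans iter; rewrite ler_wpM2r ?(ltW aNK) // ler_eXnr.
rewrite mulrA /M mulrDr mulr1 mulrCA divff ?lt0r_neq0 // mulr1 mulrDl.
by rewrite gerDl leNgt mulr_gt0.
Qed.

Section Tilt.
Variable R : realType.
Implicit Types (F : nat -> R) (g s : R).

Definition tilt g F n := expR (g * n%:R) * F n.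

Lemma tilt_ge0 g F n : (forall k, 0 <= F k) -> 0 <= tilt g F n.
Proof. by move=> F_ge0; rewrite mulr_ge0 ?expR_ge0. Qed.

Lemma tilt_gt0 g F n : 0 < F n -> 0 < tilt g F n.
Proof. by move=> Fn; rewrite mulr_gt0 ?expR_gt0. Qed.

Lemma tiltS g F n : tilt g F n.+1 = expR g * expR (g * n%:R) * F n.+1.
Proof.
by rewrite /tilt -natr1 mulrDr mulr1 expRD (mulrC (expR (g * n%:R))).
Qed.

Lemma lconv_tilt g F n :
  lconv (tilt g F) (tilt g F) n = expR (g * n%:R) * lconv F F n.
Proof.
rewrite !lconvE mulr_sumr; apply: eq_big_nat => i /andP[_ le_in].
by rewrite /tilt mulrACA -expRD -mulrDr natrB // addrC subrK.
Qed.

Lemma phi_tiltD g s F : phi F (g + s) =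
  (\sum_(0 <= n <oo) (tilt g F n * expR (s * n%:R))%:E)%E.
Proof.
by apply: eq_eseriesr => n _; rewrite /tilt mulrDl expRD mulrAC.
Qed.

End Tilt.

Lemma cvg_succ_ratio_to1 (R : realType) (u : nat -> R) :
  (\forall n \near \oo, 0 < u n) ->
  (forall t, t < 1 -> \forall n \near \oo, t * u n.+1 <= u n) ->
  (forall t, t < 1 -> \forall n \near \oo, t * u n <= u n.+1) ->
  (fun n => u n.+1 / u n) @ \oo --> (1 : R).
Proof.
move=> u_pos up lo; apply/cvgrPdist_lt => e e_gt0.
have e2 : 0 < 1 + e / 2 by lra.
set t := (1 + e / 2)^-1.
have t_gt0 : 0 < t by rewrite invr_gt0.
have t_lt1 : t < 1 by rewrite invf_lt1 //; lra.
have t_gt : 1 - e < t by rewrite -(ltr_pM2r e2) mulVf ?lt0r_neq0 //; nra.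
near=> n.
have un : 0 < u n by near: n.
have hup : t * u n.+1 <= u n by near: n; exact: up.
have hlo : t * u n <= u n.+1 by near: n; exact: lo.
rewrite ltr_distlC; apply/andP; split.
  by apply: lt_le_trans t_gt _; rewrite ler_pdivlMr.
have := ler_wpM2l (ltW e2) hup; rewrite mulrA mulfV ?lt0r_neq0 // mul1r.
rewrite ltr_pdivrMr // => /le_lt_trans; apply.
by rewrite ltr_pM2r //; lra.
Unshelve. all: by end_near.
Qed.

Section GammaHat.
Variables (R : realType) (F : nat -> R).

Lemma le_gamma_hat g : (phi F g < +oo)%E -> (g%:E <= gamma_hat F)%E.
Proof. by move=> phi_fin; apply: ereal_sup_ubound; exists g. Qed.

Lemma gamma_hat_ge0 : is_distrib F -> (0 <= gamma_hat F)%E.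
Proof.
case=> F_ge0 F_cvg; apply: le_gamma_hat.
have -> : phi F 0 = (limn (series F))%:E.
  rewrite -nneseries_EFin_lim; last exact: cvgP F_cvg.
  by apply: eq_eseriesr => n _; rewrite mul0r expR0 mul1r.
exact: ltry.
Qed.

Lemma gamma_hat_lt_pinfty c : (forall n, 0 <= F n) -> unbounded_support F ->
  0 < c -> asym_equiv (lconv F F) (fun n => c * F n) ->
  (expeR (gamma_hat F) <= limn_einf (fun n => (F n / F n.+1)%:E))%E ->
  (gamma_hat F < +oo)%E.
Proof.
move=> F_ge0 unb c_gt0 F_conv; rewrite ltey; apply: contraPneq => ->.
rewrite /= leye_eq => /eqP liminf_oo.
have [K [K_gt0 FK]] := unb 1%N.
have F_pos := asym_equiv_near_gt0 F_ge0 F_conv.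
apply: (lconv_ratio_bounded (C := c + 1) F_ge0 K_gt0 FK F_pos).
  by apply: filterS (asym_equiv_lconv_bounds F_ge0 c_gt0 F_conv ltr01) => n [].
by apply: near_succ_le_of_liminf => //; rewrite liminf_oo ltry.
Qed.

End GammaHat.

Section Forward.
Variables (R : realType) (F : nat -> R) (g : R).
Hypothesis F_lattice : S_lattice g F.

Lemma S_lattice_limn_einf_ratio :
  limn_einf (fun n => (F n / F n.+1)%:E) = (expR g)%:E.
Proof.
case: F_lattice => _ _ _ ratio _.
have : (fun n => F n / F n.+1) @ \oo --> expR g.
  have := cvgV (lt0r_neq0 (expR_gt0 (- g))) ratio; rewrite expRN invrK.
  suff -> : (fun n => F n / F n.+1) =
    unstable.inv_fun (fun n => F n.+1 / F n) by apply.
  by apply/funext => n; rewrite /unstable.inv_fun invf_div.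
move=> ratio_inv; have : (fun n => (F n / F n.+1)%:E) @ \oo --> (expR g)%:E.
  by apply: cvg_EFin => //; near=> n.
by move/cvg_limn_einf_sup => -[].
Unshelve. all: by end_near.
Qed.

Lemma S_lattice_lconv_equiv : (forall n, 0 <= F n) ->
  exists c, 0 < c /\ asym_equiv (lconv F F) (fun n => c * F n).
Proof.
move=> F_ge0; case: F_lattice => _ _ _ _ F_conv.
exists (2 * fine (phi F g)); split => //.
have phi_ge0 : (0 <= phi F g)%E.
  by apply: nneseries_ge0 => n _ _; rewrite lee_fin mulr_ge0 ?expR_ge0.
rewrite lt_neqAle mulr_ge0 ?fine_ge0 // andbT; apply/eqP => c0.
case: F_conv => /filter_ex[n]; rewrite -c0 mul0r eqxx //.
Qed.

End Forward.

Section Backward.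
Variables (R : realType) (F : nat -> R) (c g : R).
Hypotheses (F_ge0 : forall n, 0 <= F n) (F_unb : unbounded_support F).
Hypotheses (c_gt0 : 0 < c) (F_conv : asym_equiv (lconv F F) (fun n => c * F n)).
Hypotheses (ghat : gamma_hat F = g%:E)
  (F_ratio : ((expR g)%:E <= limn_einf (fun n => (F n / F n.+1)%:E))%E).

Let a := tilt g F.
Let a_ge0 n : 0 <= a n := tilt_ge0 g n F_ge0.

Lemma tilt_near_gt0 : \forall n \near \oo, 0 < a n.
Proof.
by apply: filterS (asym_equiv_near_gt0 F_ge0 F_conv) => n; apply: tilt_gt0.
Qed.

Lemma tilt_lconv_ge e : 0 < e ->
  \forall n \near \oo, (c - e) * a n <= lconv a a n.
Proof.
move=> e_gt0; apply: filterS (asym_equiv_lconv_bounds F_ge0 c_gt0 F_conv e_gt0).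
move=> n [lo _]; rewrite /a lconv_tilt /tilt mulrCA.
by rewrite ler_wpM2l ?expR_ge0.
Qed.

Lemma tilt_lconv_le e : 0 < e ->
  \forall n \near \oo, lconv a a n <= (c + e) * a n.
Proof.
move=> e_gt0; apply: filterS (asym_equiv_lconv_bounds F_ge0 c_gt0 F_conv e_gt0).
move=> n [_ hi]; rewrite /a lconv_tilt /tilt [leRHS]mulrCA.
by rewrite ler_wpM2l ?expR_ge0.
Qed.

Lemma tilt_near_succ_le t : t < 1 -> \forall n \near \oo, t * a n.+1 <= a n.
Proof.
move=> t_lt1; have : \forall n \near \oo, t * expR g * F n.+1 <= F n.
  apply: near_succ_le_of_liminf (asym_equiv_near_gt0 F_ge0 F_conv) _ => //.
  by apply: lt_le_trans F_ratio; rewrite lte_fin gtr_pMl ?expR_gt0.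
apply: filterS => n ratio; rewrite /a tiltS /tilt.
rewrite [leLHS](_ : _ = expR (g * n%:R) * (t * expR g * F n.+1)); last by ring.
by rewrite ler_wpM2l ?expR_ge0.
Qed.

Lemma twice_series_tilt_le n : 2 * series a n <= c.
Proof.
rewrite /series /=.
apply: (twice_partial_sum_le a_ge0 tilt_near_succ_le tilt_near_gt0).
exact: tilt_lconv_le.
Qed.

Lemma series_tilt_cvg : series a @ \oo --> limn (series a).
Proof.
apply: nondecreasing_is_cvgn; first exact: nondecreasing_series.
exists (c / 2) => _ [n _ <-].
by rewrite ler_pdivlMr // mulrC twice_series_tilt_le.
Qed.

Lemma phi_tilt : phi F g = (limn (series a))%:E.
Proof. exact: nneseries_EFin_lim series_tilt_cvg. Qed.

Lemma twice_lim_series_tilt : 2 * limn (series a) = c.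
Proof.
apply/eqP; rewrite eq_le; apply/andP; split.
  rewrite mulrC -ler_pdivlMr //; apply: limr_le; first exact: series_tilt_cvg.
  by near=> n; rewrite ler_pdivlMr // mulrC twice_series_tilt_le.
apply: lconv_const_le_twice_sum a_ge0 series_tilt_cvg tilt_lconv_ge _.
move=> s s_gt0 /nneseries_EFin_lim; rewrite -phi_tiltD => phiE.
have : ((g + s)%:E <= gamma_hat F)%E by apply: le_gamma_hat; rewrite phiE ltry.
by rewrite ghat lee_fin; lra.
Unshelve. all: by end_near.
Qed.

Lemma tilt_near_succ_ge t : t < 1 -> \forall n \near \oo, t * a n <= a n.+1.
Proof.
have [K [K_gt0 FK]] := F_unb 1%N.
apply: (near_succ_ge_of_lconv a_ge0 tilt_near_succ_le series_tilt_cvg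
  tilt_near_gt0).
  by rewrite twice_lim_series_tilt; exact: tilt_lconv_le.
by exists K => //; apply: tilt_gt0.
Qed.

Lemma ratio_cvg_expRN : (fun n => F n.+1 / F n) @ \oo --> expR (- g).
Proof.
have ratioE n : F n.+1 / F n = expR (- g) * (a n.+1 / a n).
  (* also when F n = 0, both sides being 0 *)
  set X := expR (g * n%:R); have X_neq0 : X != 0 by rewrite gt_eqF ?expR_gt0.
  rewrite /a tiltS /tilt -/X invfM.
  transitivity (expR (- g) * expR g * (X / X) * (F n.+1 / F n)); last by ring.
  by rewrite -expRD addNr expR0 divff // !mul1r.
rewrite (funext ratioE) -[X in _ --> X]mulr1; apply: cvgM; first exact: cvg_cst.
exact: cvg_succ_ratio_to1 tilt_near_gt0 tilt_near_succ_le tilt_near_succ_ge.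
Qed.

Lemma S_lattice_of_lconv_equiv : 0 <= g -> S_lattice g F.
Proof.
move=> g_ge0; split => //; first by rewrite phi_tilt ltry.
  exact: ratio_cvg_expRN.
by rewrite phi_tilt /= twice_lim_series_tilt.
Qed.

End Backward.

Theorem theorem8 (R : realType) (F : nat -> R) :
  is_distrib F -> unbounded_support F ->
  ((exists g : R, gamma_hat F = (g%:E)%E /\ S_lattice g F) <->
   ((expeR (gamma_hat F) <= limn_einf (fun n => ((F n / F n.+1)%:E)%E))%E /\
    (exists c : R, 0 < c /\ asym_equiv (lconv F F) (fun n => c * F n)))).
Proof.
move=> F_distrib F_unb; have [F_ge0 _] := F_distrib; split.
  move=> [g [ghat F_lattice]].
  rewrite ghat (S_lattice_limn_einf_ratio F_lattice).
  by split; [exact: lexx | exact: S_lattice_lconv_equiv F_lattice F_ge0].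
move=> [F_ratio [c [c_gt0 F_conv]]].
have ghat_ge0 := gamma_hat_ge0 F_distrib.
have ghat_lt := gamma_hat_lt_pinfty F_ge0 F_unb c_gt0 F_conv F_ratio.
have ghat : gamma_hat F = (fine (gamma_hat F))%:E.
  by rewrite fineK // ge0_fin_numE.
have g_ge0 : 0 <= fine (gamma_hat F) by rewrite -lee_fin -ghat.
rewrite ghat in F_ratio; exists (fine (gamma_hat F)); split => //.
exact: S_lattice_of_lconv_equiv F_ge0 F_unb c_gt0 F_conv ghat F_ratio g_ge0.
Qed.
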